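(* Fix $\varepsilon_{\mathrm{TV}}>0$, weights $\psi_k\ge0$ ($k=1,\dots,p$), and index sets $N_i\subseteq\{1,\dots,n\}\setminus\{i\}$ ($i=1,\dots,n$). For $\mathbf{K}\in\mathbb{R}_{\ge0}^{n\times p}$ set $|\nabla_{ik}\mathbf{K}|:=\sqrt{\varepsilon_{\mathrm{TV}}^2+\sum_{\ell\in N_i}(K_{ik}-K_{\ell k})^2}$ and consider the cost functional $$F(\mathbf{K}):=\mathrm{TV}(\mathbf{K}):=\sum_{k=1}^p\psi_k\sum_{i=1}^n|\nabla_{ik}\mathbf{K}|.$$ Then $$Q_{\mathrm{TV}}(\mathbf{K},\mathbf{A}):=\sum_{k=1}^p\psi_k\sum_{i=1}^n\frac{\varepsilon_{\mathrm{TV}}^2+\sum_{\ell\in N_i}\big[(K_{ik}-K_{\ell k})(A_{ik}-A_{\ell k})+(K_{\ell k}-A_{\ell k})^2+(K_{ik}-A_{ik})^2\big]}{|\nabla_{ik}\mathbf{A}|}$$ defines a separable and convex surrogate functional for $F$.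
   Context: The arguments $\mathbf{K},\mathbf{A}$ range over $n\times p$ matrices with positive entries. A map $Q_F$ is a surrogate functional for $F$ if $Q_F(\mathbf{x},\mathbf{a})\ge F(\mathbf{x})$ for all $\mathbf{x},\mathbf{a}$ and $Q_F(\mathbf{x},\mathbf{x})=F(\mathbf{x})$ for all $\mathbf{x}$. A surrogate is separable if $Q_F(\mathbf{x},\mathbf{a})=\sum_i g_i(x_i,\mathbf{a})$ for some functions $g_i$ (matrix entries playing the role of coordinates). Convexity refers to the first argument. *)

From mathcomp Require Import all_boot all_order all_algebra.
Set Implicit Arguments. Unset Strict Implicit. Unset Printing Implicit Defensive.
Import Order.TTheory GRing.Theory Num.Theory.
Local Open Scope ring_scope.

Section TV.
Variables (R : rcfType) (n p : nat).

Definition posmx (K : 'M[R]_(n, p)) : Prop := forall i k, 0 < K i k.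

Definition gradTV (eps : R) (N : 'I_n -> {set 'I_n}) (K : 'M[R]_(n, p))
    (i : 'I_n) (k : 'I_p) : R :=
  Num.sqrt (eps ^+ 2 + \sum_(l in N i) (K i k - K l k) ^+ 2).

Definition TV (eps : R) (psi : 'I_p -> R) (N : 'I_n -> {set 'I_n})
    (K : 'M[R]_(n, p)) : R :=
  \sum_(k < p) psi k * \sum_(i < n) gradTV eps N K i k.

Definition QTV (eps : R) (psi : 'I_p -> R) (N : 'I_n -> {set 'I_n})
    (K A : 'M[R]_(n, p)) : R :=
  \sum_(k < p) psi k * \sum_(i < n)
    ((eps ^+ 2 + \sum_(l in N i)
        ((K i k - K l k) * (A i k - A l k) + (K l k - A l k) ^+ 2
         + (K i k - A i k) ^+ 2)) / gradTV eps N A i k).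

Definition is_surrogate (F : 'M[R]_(n, p) -> R)
    (Q : 'M[R]_(n, p) -> 'M[R]_(n, p) -> R) : Prop :=
  (forall K A, posmx K -> posmx A -> F K <= Q K A) /\
  (forall K, posmx K -> Q K K = F K).

Definition separable (Q : 'M[R]_(n, p) -> 'M[R]_(n, p) -> R) : Prop :=
  exists g : 'I_n -> 'I_p -> R -> 'M[R]_(n, p) -> R,
    forall K A, posmx K -> posmx A ->
      Q K A = \sum_(i < n) \sum_(k < p) g i k (K i k) A.

Definition convex_first (Q : 'M[R]_(n, p) -> 'M[R]_(n, p) -> R) : Prop :=
  forall A X Y (t : R), posmx A -> posmx X -> posmx Y -> 0 <= t -> t <= 1 ->
    Q ((1 - t) *: X + t *: Y) A <= (1 - t) * Q X A + t * Q Y A.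

End TV.

(* Each summand of Q_TV is quadratic in K with a nonnegative leading part,
   so Q_TV is convex in K; its cross terms split into one-entry pieces, so it
   is separable.  The majorization comes from 2ab <= a^2 + b^2 applied to
   a = |nabla_ik K| and b = |nabla_ik A|: the completed square
   ((K_ik - A_ik) + (K_lk - A_lk))^2 >= 0 shows a^2 + b^2 is at most twice the
   numerator of Q_TV, i.e. a <= numerator / b, with equality when K = A. *)
From mathcomp Require Import all_boot all_order all_algebra.
From mathcomp Require Import ring.
Set Implicit Arguments. Unset Strict Implicit. Unset Printing Implicit Defensive.
Import Order.TTheory GRing.Theory Num.Theory.
Local Open Scope ring_scope.

Section ScalarInequalities.
Variable R : rcfType.
Implicit Types (a b c e t u x y : R).

Lemma ler_convex_sum (I : finType) (P : pred I) (f g h : I -> R) t :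
  (forall i, P i -> f i <= (1 - t) * g i + t * h i) ->
  \sum_(i | P i) f i <= (1 - t) * \sum_(i | P i) g i + t * \sum_(i | P i) h i.
Proof. by move=> fgh; rewrite !mulr_sumr -big_split; apply: ler_sum. Qed.

Lemma ler_convex_wpM2l c u x y t : 0 <= c ->
  u <= (1 - t) * x + t * y -> c * u <= (1 - t) * (c * x) + t * (c * y).
Proof.
move=> c_ge0 uxy.
have -> : (1 - t) * (c * x) + t * (c * y) = c * ((1 - t) * x + t * y) by ring.
exact: ler_wpM2l.
Qed.

Lemma ler_convex_pdivr b u x y t : 0 < b ->
  u <= (1 - t) * x + t * y -> u / b <= (1 - t) * (x / b) + t * (y / b).
Proof.
move=> b_gt0 uxy; rewrite !mulrA -mulrDl.
by rewrite ler_pM2r // invr_gt0.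
Qed.

Lemma ler_convex_addl e u x y t :
  u <= (1 - t) * x + t * y -> e + u <= (1 - t) * (e + x) + t * (e + y).
Proof.
move=> uxy.
have -> : (1 - t) * (e + x) + t * (e + y) = e + ((1 - t) * x + t * y) by ring.
by rewrite lerD2l.
Qed.

Definition neighbour_term (ki kl ai al : R) : R :=
  (ki - kl) * (ai - al) + (kl - al) ^+ 2 + (ki - ai) ^+ 2.

Lemma neighbour_term_convex xi xl yi yl ai al t : 0 <= t -> t <= 1 ->
  neighbour_term ((1 - t) * xi + t * yi) ((1 - t) * xl + t * yl) ai al <=
  (1 - t) * neighbour_term xi xl ai al + t * neighbour_term yi yl ai al.
Proof.
move=> t_ge0 t_le1; rewrite /neighbour_term -subr_ge0.
set lhs := (X in _ - X); set rhs := (X in X - _).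
have -> : rhs - lhs = t * (1 - t) * ((xl - yl) ^+ 2 + (xi - yi) ^+ 2).
  by rewrite /rhs /lhs; ring.
by rewrite mulr_ge0 ?addr_ge0 ?sqr_ge0 // mulr_ge0 // subr_ge0.
Qed.

Lemma sqr_add_le_neighbour_term ki kl ai al :
  (ki - kl) ^+ 2 + (ai - al) ^+ 2 <= 2 * neighbour_term ki kl ai al.
Proof.
rewrite -subr_ge0.
have -> : 2 * neighbour_term ki kl ai al - ((ki - kl) ^+ 2 + (ai - al) ^+ 2)
    = ((ki - ai) + (kl - al)) ^+ 2 by rewrite /neighbour_term; ring.
exact: sqr_ge0.
Qed.

Lemma ler_pdiv_of_sqrD_le a b c : 0 < b -> a ^+ 2 + b ^+ 2 <= 2 * c -> a <= c / b.
Proof.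
move=> b_gt0 le_sq; rewrite ler_pdivlMr // -(ler_pM2l (ltr0n R 2)).
apply: le_trans le_sq; rewrite -subr_ge0.
have -> : a ^+ 2 + b ^+ 2 - 2%:R * (a * b) = (a - b) ^+ 2 by ring.
exact: sqr_ge0.
Qed.

End ScalarInequalities.

Lemma big_in_set_exchange (R : nmodType) (I : finType) (N : I -> {set I})
    (f : I -> I -> R) :
  \sum_i \sum_(l in N i) f i l = \sum_l \sum_i (if l \in N i then f i l else 0).
Proof. by under eq_bigr do rewrite big_mkcond; rewrite exchange_big. Qed.

Section TVSurrogate.
Variables (R : rcfType) (n p : nat) (eps : R) (psi : 'I_p -> R).
Variable N : 'I_n -> {set 'I_n}.
Hypothesis eps_gt0 : 0 < eps.
Hypothesis psi_ge0 : forall k, 0 <= psi k.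
Implicit Types K A X Y : 'M[R]_(n, p).

Lemma gradTV_sqr K i k :
  gradTV eps N K i k ^+ 2 = eps ^+ 2 + \sum_(l in N i) (K i k - K l k) ^+ 2.
Proof. by rewrite sqr_sqrtr // addr_ge0 ?sqr_ge0 // sumr_ge0 // => l _; apply: sqr_ge0. Qed.

Lemma gradTV_gt0 K i k : 0 < gradTV eps N K i k.
Proof.
rewrite sqrtr_gt0 ltr_wpDr ?exprn_gt0 //.
by rewrite sumr_ge0 // => l _; apply: sqr_ge0.
Qed.

Lemma gradTV_le_QTV_term K A i k :
  gradTV eps N K i k <=
  (eps ^+ 2 + \sum_(l in N i) neighbour_term (K i k) (K l k) (A i k) (A l k))
    / gradTV eps N A i k.
Proof.
apply: ler_pdiv_of_sqrD_le; first exact: gradTV_gt0.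
rewrite !gradTV_sqr addrACA -big_split mulrDr mulr_natl mulr2n lerD2l.
by rewrite mulr_sumr; apply: ler_sum => l _; apply: sqr_add_le_neighbour_term.
Qed.

Lemma TV_le_QTV K A : TV eps psi N K <= QTV eps psi N K A.
Proof.
apply: ler_sum => k _; apply: ler_wpM2l => //.
by apply: ler_sum => i _; apply: gradTV_le_QTV_term.
Qed.

Lemma QTV_diag K : QTV eps psi N K K = TV eps psi N K.
Proof.
apply: eq_bigr => k _; congr (_ * _); apply: eq_bigr => i _.
under eq_bigr do rewrite !subrr expr0n !addr0 -expr2.
rewrite -gradTV_sqr expr2 mulfK //; exact/lt0r_neq0/gradTV_gt0.
Qed.

Lemma QTV_convex A X Y t : 0 <= t -> t <= 1 ->
  QTV eps psi N ((1 - t) *: X + t *: Y) A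
    <= (1 - t) * QTV eps psi N X A + t * QTV eps psi N Y A.
Proof.
move=> t_ge0 t_le1.
apply: ler_convex_sum => k _; apply: ler_convex_wpM2l => //.
apply: ler_convex_sum => i _; apply: ler_convex_pdivr; first exact: gradTV_gt0.
apply: ler_convex_addl; apply: ler_convex_sum => l _.
by rewrite !mxE; apply: neighbour_term_convex.
Qed.

(* The contribution of the entry x = K_ik: the pieces of the terms of row i,
   plus its share of the terms of every row j having i as a neighbour. *)
Definition QTV_entry i k (x : R) A : R :=
  psi k * ((eps ^+ 2 + \sum_(l in N i) (x * (A i k - A l k) + (x - A i k) ^+ 2))
             / gradTV eps N A i k
           + \sum_j (if i \in N j then
                       (- (x * (A j k - A i k)) + (x - A i k) ^+ 2)
                         / gradTV eps N A j k
                     else 0)).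

Lemma QTV_separated K A :
  QTV eps psi N K A = \sum_i \sum_k QTV_entry i k (K i k) A.
Proof.
rewrite /QTV exchange_big; apply: eq_bigr => k _.
rewrite -mulr_sumr; congr (_ * _); rewrite big_split -big_in_set_exchange.
rewrite -big_split /=; apply: eq_bigr => i _.
rewrite -mulr_suml -mulrDl -addrA -big_split /=; congr ((_ + _) / _).
by apply: eq_bigr => l _; ring.
Qed.

End TVSurrogate.

Theorem theorem5 (R : rcfType) (n p : nat) (eps : R) (psi : 'I_p -> R)
    (N : 'I_n -> {set 'I_n}) :
  0 < eps ->
  (forall k, 0 <= psi k) ->
  (forall i, i \notin N i) ->
  is_surrogate (TV eps psi N) (QTV eps psi N) /\
  separable (QTV eps psi N) /\
  convex_first (QTV eps psi N).
Proof.
(* The majorization holds term by term even for l = i. *)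
move=> eps_gt0 psi_ge0 _.
split; [split|split].
- by move=> K A _ _; apply: TV_le_QTV.
- by move=> K _; apply: QTV_diag.
- by exists (QTV_entry eps psi N) => K A _ _; apply: QTV_separated.
- by move=> A X Y t _ _ _; apply: QTV_convex.
Qed.
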